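(* Let $K,F,g$ be positive integers with $K\ge g\ge 2$. Let $\mathbf{P}=[p_{j,k}]$ be an $F\times K$ array whose entries are either a special symbol $*$ or nonnegative integers, satisfying: (C2') each integer occurring in $\mathbf{P}$ occurs exactly $g$ times; (C3) for any two distinct entries with $p_{j_1,k_1}=p_{j_2,k_2}=s$ an integer, we have $j_1\neq j_2$, $k_1\neq k_2$, and $p_{j_1,k_2}=p_{j_2,k_1}=*$; (C4) each row of $\mathbf{P}$ contains exactly $g-1$ symbols $*$. Then $F\ge\binom{K}{g-1}$. *)

From mathcomp Require Import all_boot.
Set Implicit Arguments. Unset Strict Implicit. Unset Printing Implicit Defensive.

(* An F x K array whose entries are either the symbol * (encoded as None)
   or a nonnegative integer s (encoded as Some s). Rows j : 'I_F, columns k : 'I_K. *)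
Definition array (F K : nat) := 'I_F -> 'I_K -> option nat.

Definition C2' F K (g : nat) (P : array F K) : Prop :=
  forall s : nat, (exists j k, P j k = Some s) ->
    #|[set jk : 'I_F * 'I_K | P jk.1 jk.2 == Some s]| = g.

Definition C3 F K (P : array F K) : Prop :=
  forall (j1 j2 : 'I_F) (k1 k2 : 'I_K) (s : nat),
    (j1, k1) <> (j2, k2) -> P j1 k1 = Some s -> P j2 k2 = Some s ->
    [/\ j1 <> j2, k1 <> k2, P j1 k2 = None & P j2 k1 = None].

Definition C4 F K (g : nat) (P : array F K) : Prop :=
  forall j : 'I_F, #|[set k : 'I_K | P j k == None]| = g - 1.

From mathcomp Require Import all_boot.
Set Implicit Arguments. Unset Strict Implicit.

(* Call the set of *-columns of a row its star set; by (C4) star sets have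
   size g-1.  If row j has an integer s in a column k outside its star set,
   the g-1 other occurrences of s lie in distinct columns, all of them stars
   of row j by (C3), hence they fill the star set of row j.  The occurrence
   in column t then lies in a row whose star set is again (C3) the star set
   of row j with t exchanged for k.  Such exchanges connect all (g-1)-subsets
   of the columns, so every one of them is the star set of some row. *)

Section StarSets.

Variables (F K g : nat) (P : array F K).
Hypotheses (P_C2' : C2' g P) (P_C3 : C3 P) (P_C4 : C4 g P).

Definition stars (j : 'I_F) : {set 'I_K} := [set k | P j k == None].

Definition occurrences (s : nat) : {set 'I_F * 'I_K} :=
  [set jk | P jk.1 jk.2 == Some s].

Lemma card_stars j : #|stars j| = g.-1.
Proof. by rewrite P_C4 subn1. Qed.

Lemma other_occurrence_cols (j : 'I_F) (k : 'I_K) s :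
  P j k = Some s ->
  [set jk.2 | jk in occurrences s :\ (j, k)] = stars j.
Proof.
move=> Pjk; have jk_occ : (j, k) \in occurrences s by rewrite inE Pjk.
have card_other : #|occurrences s :\ (j, k)| = g.-1.
  have := cardsD1 (j, k) (occurrences s).
  by rewrite jk_occ (P_C2' (ex_intro _ j (ex_intro _ k Pjk))) add1n => ->.
have col_inj : {in occurrences s :\ (j, k) &, injective snd}.
  move=> [j1 k1] [j2 k2]; rewrite !inE => /andP[_ /eqP P1] /andP[_ /eqP P2] /= k12.
  have [-> //|/eqP ne] := eqVneq (j1, k1) (j2, k2).
  by have [] := P_C3 ne P1 P2.
apply/eqP; rewrite eqEcard card_in_imset // card_other card_stars leqnn andbT.
apply/subsetP => _ /imsetP[[j1 k1] + ->]; rewrite !inE => /andP[ne /eqP P1].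
by have [_ _ -> _] := P_C3 (nesym (elimN eqP ne)) Pjk P1.
Qed.

Lemma stars_exchange (j : 'I_F) (k t : 'I_K) :
  k \notin stars j -> t \in stars j ->
  exists j', stars j' = k |: (stars j :\ t).
Proof.
case Pjk: (P j k) => [s|]; last by rewrite inE Pjk.
move=> k_notin t_in.
have /imsetP[[j' t'] + /= tt'] : t \in [set jk.2 | jk in occurrences s :\ (j, k)].
  by rewrite other_occurrence_cols.
rewrite -{t'}tt' !inE => /andP[ne' /eqP Pj't].
exists j'; apply/eqP; rewrite eq_sym eqEcard.
have card_exchange : #|k |: (stars j :\ t)| = #|stars j|.
  by rewrite cardsU1 in_setD1 (negbTE k_notin) andbF [RHS](cardsD1 t) t_in.
rewrite card_exchange !card_stars leqnn andbT.
apply/subsetP => x; rewrite in_setU1 in_setD1 => /predU1P[->|/andP[xt x_in]].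
  by have [_ _ _ Pj'k] := P_C3 (nesym (elimN eqP ne')) Pjk Pj't; rewrite inE Pj'k.
move: x_in; rewrite -(other_occurrence_cols Pjk) => /imsetP[[j1 x'] + /= xx'].
rewrite -{x'}xx' !inE => /andP[_ /eqP Pj1x].
have ne : (j', t) <> (j1, x) by case=> _ tx; rewrite tx eqxx in xt.
by have [_ _ -> _] := P_C3 ne Pj't Pj1x.
Qed.

Lemma stars_reach (j : 'I_F) (T : {set 'I_K}) :
  #|T| = g.-1 -> exists j', stars j' = T.
Proof.
move=> cardT; move: {2}#|T :\: stars j| (leqnn #|T :\: stars j|) => n.
elim: n j => [|n IH] j.
  rewrite leqn0 cards_eq0 setD_eq0 => sub; exists j.
  by apply/eqP; rewrite eq_sym eqEcard sub card_stars cardT leqnn.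
have [/IH //|n_lt le_n1] := leqP #|T :\: stars j| n.
have card_sym : #|stars j :\: T| = #|T :\: stars j|.
  by rewrite !cardsD setIC cardT card_stars.
have [k] : exists k, k \in T :\: stars j.
  by apply/set0Pn; rewrite -card_gt0 (leq_ltn_trans _ n_lt).
have [t] : exists t, t \in stars j :\: T.
  by apply/set0Pn; rewrite -card_gt0 card_sym (leq_ltn_trans _ n_lt).
rewrite !in_setD => /andP[t_notin t_in] /andP[k_notin k_in].
have [j' Ej'] := stars_exchange k_notin t_in.
apply: (IH j'); rewrite Ej'.
have -> : T :\: (k |: (stars j :\ t)) = (T :\: stars j) :\ k.
  apply/setP => x; rewrite !inE; case: (eqVneq x t) => [->|_].
    by rewrite (negbTE t_notin) !andbF.
  by rewrite negb_or /= andbA.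
by move: le_n1; rewrite (cardsD1 k) in_setD k_notin k_in add1n ltnS.
Qed.

End StarSets.

Theorem lemma2 (K F g : nat) (P : array F K) :
  0 < F -> 2 <= g -> g <= K ->
  C2' g P -> C3 P -> C4 g P ->
  'C(K, g.-1) <= F.
Proof.
move=> F_gt0 _ _ P_C2' P_C3 P_C4.
rewrite -{1}(card_ord K) -card_draws.
apply: leq_trans (subset_leq_card (_ : _ \subset [set stars P j | j in 'I_F])) _.
  apply/subsetP => T; rewrite inE => /eqP cardT.
  have [j <-] := stars_reach P_C2' P_C3 P_C4 (Ordinal F_gt0) cardT.
  exact: imset_f.
by rewrite (leq_trans (leq_imset_card _ _)) ?card_ord.
Qed.
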